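(* Let $s\ge1$ and let $f\in C^{s+1}(\mathbb{R}^s)$ satisfy $\|D^kf\|_\infty<\infty$ for $k=1,\dots,s+1$. Then for every $\theta\in\{0,1\}^s$, $$\lim_{n\to\infty}\sup_{\alpha\in\mathbb{Z}^s}\left|(-1)^{|\theta|}\,2^{(n+2)|\theta|+ns/2}\,d_{\theta,\alpha}^n(f)-\frac{D^\theta f\left(x_\alpha^n\right)}{\theta!}\right|=0.$$
   Context: Univariate Haar functions: $\psi_0:=\chi_{[0,1]}$ and $\psi_1:=\chi_{[0,\frac12]}-\chi_{[\frac12,1]}$. For $\theta\in\{0,1\}^s$ and $x\in\mathbb{R}^s$, $\psi_\theta(x):=\prod_{j=1}^s\psi_{\theta_j}(x_j)$. For $n\in\mathbb{N}_0$, $\alpha\in\mathbb{Z}^s$, $d_{\theta,\alpha}^n(f):=2^{ns/2}\int_{\mathbb{R}^s}f(t)\,\psi_\theta(2^nt-\alpha)\,dt$. Let $\epsilon:=(1,\dots,1)$ and $x_\alpha^n:=2^{-n}(\alpha+\frac12\epsilon)$. For $k\in\mathbb{N}$, $\|D^kf\|_\infty:=\sup_{x\in\mathbb{R}^s}\max_{|\gamma|=k}\left|\frac{D^\gamma f(x)}{\gamma!}\right|$ (maximum over multi-indices $\gamma\in\mathbb{N}_0^s$). Multi-index notation: $|\theta|=\sum_j\theta_j$, $\theta!=\prod_j\theta_j!$. *)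

From Stdlib Require Import Reals ZArith.
From Coquelicot Require Import Coquelicot.
From mathcomp Require Import ssreflect ssrfun ssrbool eqtype ssrnat seq fintype.

Set Implicit Arguments.
Unset Strict Implicit.

Local Open Scope R_scope.

Definition vec (s : nat) := 'I_s -> R.

Definition upd {s} (x : vec s) (j : 'I_s) (t : R) : vec s :=
  fun i => if i == j then t else x i.

Definition pd {s} (j : 'I_s) (g : vec s -> R) : vec s -> R :=
  fun x => Derive (fun t => g (upd x j t)) (x j).

Definition pdl {s} (l : seq 'I_s) (g : vec s -> R) : vec s -> R :=
  foldr (fun j h => pd j h) g l.

Definition cont_vec {s} (g : vec s -> R) : Prop :=
  forall (x : vec s) (eps : R), 0 < eps -> exists delta, 0 < delta /\
    forall y : vec s, (forall i, Rabs (y i - x i) < delta) ->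
      Rabs (g y - g x) < eps.

Definition Ck {s} (k : nat) (f : vec s -> R) : Prop :=
  (forall l : seq 'I_s, (size l < k)%N ->
     forall (j : 'I_s) (x : vec s), ex_derive (fun t => pdl l f (upd x j t)) (x j))
  /\ (forall l : seq 'I_s, (size l <= k)%N -> cont_vec (pdl l f)).

Definition mabs {s} (g : 'I_s -> nat) : nat := foldr addn 0%N (map g (enum 'I_s)).
Definition mfact {s} (g : 'I_s -> nat) : nat :=
  foldr muln 1%N (map (fun i => factorial (g i)) (enum 'I_s)).

Definition Dmulti {s} (g : 'I_s -> nat) (f : vec s -> R) : vec s -> R :=
  pdl (flatten (map (fun i => nseq (g i) i) (enum 'I_s))) f.

(* ||D^k f||_oo < oo *)
Definition Dk_bounded {s} (k : nat) (f : vec s -> R) : Prop :=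
  exists M : R, forall (x : vec s) (g : 'I_s -> nat), mabs g = k ->
    Rabs (Dmulti g f x / INR (mfact g)) <= M.

Definition chi (a b x : R) : R :=
  if Rle_dec a x then (if Rle_dec x b then 1 else 0) else 0.
Definition psi0 (x : R) : R := chi 0 1 x.
Definition psi1 (x : R) : R := chi 0 (/2) x - chi (/2) 1 x.
Definition psi1d (b : bool) : R -> R := if b then psi1 else psi0.

Definition Rprodl (l : seq R) : R := foldr Rmult 1 l.

Definition psi {s} (theta : 'I_s -> bool) (x : vec s) : R :=
  Rprodl (map (fun j => psi1d (theta j) (x j)) (enum 'I_s)).

Fixpoint iter_int {s} (l : seq 'I_s) (a b : vec s) (g : vec s -> R) (x : vec s) : R :=
  match l with
  | [::] => g x
  | j :: l' => RInt (fun t => iter_int l' a b g (upd x j t)) (a j) (b j)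
  end.
Definition box_integral {s} (a b : vec s) (g : vec s -> R) : R :=
  iter_int (enum 'I_s) a b g (fun _ => 0).

(* d^n_{theta,alpha}(f) = 2^{ns/2} int_{R^s} f(t) psi_theta(2^n t - alpha) dt;
   the integrand vanishes outside the dyadic cube
   prod_j [2^{-n} alpha_j, 2^{-n}(alpha_j + 1)], so we integrate over it. *)
Definition haar_coef {s} (theta : 'I_s -> bool) (n : nat) (alpha : 'I_s -> Z)
    (f : vec s -> R) : R :=
  Rpower 2 (INR (n * s) / 2) *
  box_integral (fun j => IZR (alpha j) / 2 ^ n) (fun j => (IZR (alpha j) + 1) / 2 ^ n)
    (fun t => f t * psi theta (fun j => 2 ^ n * t j - IZR (alpha j))).

Definition xna {s} (n : nat) (alpha : 'I_s -> Z) : vec s :=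
  fun j => (IZR (alpha j) + /2) / 2 ^ n.

Definition theta_nat {s} (theta : 'I_s -> bool) : 'I_s -> nat := fun j => nat_of_bool (theta j).

(* Write h = 2^-n and a = 2^-n alpha. Integrating coordinate by coordinate,
   a direction j with theta_j = 0 contributes the plain integral over
   [a_j, a_j + h], and a direction with theta_j = 1 the integral of
   g(t) - g(t + h/2) over [a_j, a_j + h/2]. Hence the Haar coefficient is an
   average over a cell of an iterated difference of f with step h/2 in the
   directions J = {j | theta_j = 1}. Applying the mean value theorem once per
   direction of J, that iterated difference is (-h/2)^|J| D^theta f at a point
   of the cell; since the derivatives of order |J| + 1 are bounded, D^theta f
   moves by O(h) on the cell, and after rescaling the error is O(2^-n). *)

From Stdlib Require Import Reals Lra FunctionalExtensionality.
From Coquelicot Require Import Coquelicot.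
From mathcomp Require Import ssreflect ssrfun ssrbool eqtype ssrnat seq path fintype.

Set Implicit Arguments.
Unset Strict Implicit.
Local Open Scope R_scope.

(** * Coordinate updates and partial derivatives *)

Lemma upd_same s (x : vec s) j t : upd x j t j = t.
Proof. by rewrite /upd eqxx. Qed.

Lemma upd_other s (x : vec s) j t i : i != j -> upd x j t i = x i.
Proof. by rewrite /upd => /negbTE ->. Qed.

Lemma upd_upd s (x : vec s) j u t : upd (upd x j u) j t = upd x j t.
Proof. by apply: functional_extensionality => i; rewrite /upd; case: (i == j). Qed.

Lemma upd_comm s (x : vec s) i j u v : i != j ->
  upd (upd x i u) j v = upd (upd x j v) i u.
Proof.
move=> hij; apply: functional_extensionality => k; rewrite /upd.
have hji : j != i by rewrite eq_sym.
by case: (eqVneq k j) => [->|_]; [rewrite (negbTE hji) | case: (k == i)].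
Qed.

Lemma upd_id s (x : vec s) j : upd x j (x j) = x.
Proof. by apply: functional_extensionality => i; rewrite /upd; case: eqP => // ->. Qed.

Definition pderivable {s} (G : vec s -> R) (j : 'I_s) : Prop :=
  forall x, ex_derive (fun t => G (upd x j t)) (x j).

Lemma pderivable_line s (G : vec s -> R) j : pderivable G j ->
  forall x u, ex_derive (fun t => G (upd x j t)) u.
Proof.
move=> hG x u; have := hG (upd x j u); rewrite upd_same.
by congr ex_derive; apply: functional_extensionality => t; rewrite upd_upd.
Qed.

Lemma Derive_line s (G : vec s -> R) j x u :
  Derive (fun t => G (upd x j t)) u = pd j G (upd x j u).
Proof.
rewrite /pd upd_same; congr Derive.
by apply: functional_extensionality => t; rewrite upd_upd.
Qed.

Lemma is_derive_line s (G : vec s -> R) j : pderivable G j ->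
  forall x u, is_derive (fun t => G (upd x j t)) u (pd j G (upd x j u)).
Proof.
move=> hG x u; rewrite -Derive_line; apply: Derive_correct; exact: pderivable_line.
Qed.

Lemma pd_mvt s (G : vec s -> R) j : pderivable G j -> forall x u,
  exists c, Rmin (x j) u <= c <= Rmax (x j) u /\
    G (upd x j u) - G x = pd j G (upd x j c) * (u - x j).
Proof.
move=> hG x u.
have hd := is_derive_line hG x.
have [||c [hc]] := MVT_gen (fun t => G (upd x j t)) (x j) u (fun t => pd j G (upd x j t)).
- by move=> t _; exact: hd.
- move=> t _; apply/continuity_pt_filterlim.
  by apply: ex_derive_continuous; eexists; exact: hd.
by rewrite upd_id => e; exists c.
Qed.

Lemma pdl_rcons s L j (g : vec s -> R) : pdl (rcons L j) g = pdl L (pd j g).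
Proof. by elim: L => //= k L ->. Qed.

(** * Coordinatewise Lipschitz functions *)

Definition coord_lipschitz_by {s} (F : vec s -> R) (M : R) : Prop :=
  forall x j u, Rabs (F (upd x j u) - F x) <= M * Rabs (u - x j).

Definition coord_lipschitz {s} (F : vec s -> R) : Prop :=
  exists M, 0 <= M /\ coord_lipschitz_by F M.

Lemma coord_lipschitz_continuous s (F : vec s -> R) : coord_lipschitz F ->
  forall x j t, continuous (fun u => F (upd x j u)) t.
Proof.
case=> M [M0 HM] x j t; apply/continuity_pt_filterlim => eps Heps.
exists (eps / (M + 1)); split; first by apply: Rdiv_lt_0_compat; lra.
move=> y [_ Hy]; rewrite /= /R_dist in Hy *.
have := HM (upd x j t) j y; rewrite upd_upd upd_same => H.
apply: Rle_lt_trans H _.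
have: M * Rabs (y - t) <= M * (eps / (M + 1)) by apply: Rmult_le_compat_l => //; lra.
have : M * (eps / (M + 1)) < eps.
  by apply: (Rmult_lt_reg_r (M + 1)); [lra | field_simplify; lra].
lra.
Qed.

Lemma coord_lipschitz_sub s (F G : vec s -> R) :
  coord_lipschitz F -> coord_lipschitz G -> coord_lipschitz (fun y => F y - G y).
Proof.
move=> [M1 [M10 H1]] [M2 [M20 H2]]; exists (M1 + M2); split; first lra.
move=> x j u.
have -> : F (upd x j u) - G (upd x j u) - (F x - G x) =
  (F (upd x j u) - F x) - (G (upd x j u) - G x) by ring.
apply: Rle_trans (Rabs_triang _ _) _; rewrite Rabs_Ropp.
have := H1 x j u; have := H2 x j u; lra.
Qed.

Lemma pd_bounded_lipschitz s (F : vec s -> R) M :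
  (forall j, pderivable F j) -> (forall x j, Rabs (pd j F x) <= M) ->
  coord_lipschitz_by F M.
Proof.
move=> hF hM x j u; have [c [_ ->]] := pd_mvt (hF j) x u.
by rewrite Rabs_mult; apply: Rmult_le_compat_r; [exact: Rabs_pos | exact: hM].
Qed.

Lemma coord_lipschitz_box s (F : vec s -> R) M : 0 <= M -> coord_lipschitz_by F M ->
  forall z c d, (forall i, Rabs (z i - c i) <= d) ->
  Rabs (F z - F c) <= M * INR s * d.
Proof.
move=> M0 hF z c d hd.
pose mix (l : seq 'I_s) i := if i \in l then z i else c i.
suff key l : Rabs (F (mix l) - F c) <= M * INR (size l) * d.
  have := key (enum 'I_s); rewrite size_enum_ord.
  suff -> : mix (enum 'I_s) = z by [].
  by apply: functional_extensionality => i; rewrite /mix mem_enum.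
elim: l => [|k l IH].
  have -> : mix [::] = c by apply: functional_extensionality => i; rewrite /mix in_nil.
  rewrite Rminus_diag Rabs_R0 /=; lra.
have -> : mix (k :: l) = upd (mix l) k (z k).
  apply: functional_extensionality => i; rewrite /mix /upd inE.
  by case: (eqVneq i k) => [->|].
have hk : Rabs (z k - mix l k) <= d.
  rewrite /mix; case: (k \in l) => //; rewrite Rminus_diag Rabs_R0.
  exact: Rle_trans (Rabs_pos _) (hd k).
have := hF (mix l) k (z k).
have -> : F (upd (mix l) k (z k)) - F c =
  (F (upd (mix l) k (z k)) - F (mix l)) + (F (mix l) - F c) by ring.
move=> h1; apply: Rle_trans (Rabs_triang _ _) _.
rewrite (_ : size (k :: l) = (size l).+1) // S_INR.
have : M * Rabs (z k - mix l k) <= M * d by apply: Rmult_le_compat_l.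
nra.
Qed.

(** * Haar integrals over a dyadic cell *)

Lemma RInt_minusR (f g : R -> R) a b : ex_RInt f a b -> ex_RInt g a b ->
  RInt (fun x => f x - g x) a b = RInt f a b - RInt g a b.
Proof. exact: RInt_minus. Qed.

Lemma ex_RInt_cont (f : R -> R) a b : (forall t, continuous f t) -> ex_RInt f a b.
Proof. by move=> hf; apply: ex_RInt_continuous => z _; exact: hf. Qed.

Lemma continuous_shift (Q : R -> R) c : (forall t, continuous Q t) ->
  forall t, continuous (fun t => Q (t + c)) t.
Proof.
move=> hQ t; apply: (continuous_comp (fun t => t + c) Q); last exact: hQ.
by apply: (continuous_plus (fun t => t) (fun _ => c));
  [exact: continuous_id | exact: continuous_const].
Qed.

Lemma continuous_sub_shift (Q : R -> R) c : (forall t, continuous Q t) ->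
  forall t, continuous (fun t => Q t - Q (t + c)) t.
Proof.
move=> hQ t; apply: (continuous_minus Q); [exact: hQ | exact: continuous_shift].
Qed.

Lemma RInt_near_const (g : R -> R) a b C E : a <= b -> (forall t, continuous g t) ->
  (forall t, a <= t <= b -> Rabs (g t - C) <= E) ->
  Rabs (RInt g a b - (b - a) * C) <= (b - a) * E.
Proof.
move=> hab hg hb.
have hc : ex_RInt (fun _ : R => C) a b by apply: ex_RInt_cont => t; exact: continuous_const.
have hg' : ex_RInt g a b by exact: ex_RInt_cont.
have -> : (b - a) * C = RInt (fun _ => C) a b by rewrite RInt_const.
rewrite -(RInt_minusR hg' hc); apply: abs_RInt_le_const => //.
exact: ex_RInt_minus.
Qed.

Section HaarCell.
Variables (s : nat) (th : 'I_s -> bool) (h : R) (a : vec s).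
Hypothesis h_gt0 : 0 < h.

Definition haar_width j := if th j then h / 2 else h.

(* [haar_int j Q] is the integral of [Q] against the Haar factor [psi_(th j)]
   rescaled to [a j, a j + h]; see [RInt_haar_weight]. *)
Definition haar_kernel j (Q : R -> R) t := if th j then Q t - Q (t + h / 2) else Q t.

Definition haar_int j (Q : R -> R) := RInt (haar_kernel j Q) (a j) (a j + haar_width j).

Fixpoint iter_haar_int (l : seq 'I_s) (K : vec s -> R) (x : vec s) : R :=
  match l with
  | [::] => K x
  | j :: l' => haar_int j (fun t => iter_haar_int l' K (upd x j t))
  end.

Lemma haar_width_gt0 j : 0 < haar_width j.
Proof. rewrite /haar_width; case: (th j); lra. Qed.

Lemma continuous_haar_kernel j (Q : R -> R) : (forall t, continuous Q t) ->
  forall t, continuous (haar_kernel j Q) t.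
Proof. by rewrite /haar_kernel; case: (th j) => // hQ; exact: continuous_sub_shift. Qed.

Lemma haar_int_sub j (Q1 Q2 : R -> R) :
  (forall t, continuous Q1 t) -> (forall t, continuous Q2 t) ->
  haar_int j (fun t => Q1 t - Q2 t) = haar_int j Q1 - haar_int j Q2.
Proof.
move=> h1 h2; rewrite /haar_int -RInt_minusR;
  try by apply: ex_RInt_cont; exact: continuous_haar_kernel.
(* [ring] does not see through the normed-module carrier of [RInt] values. *)
have e (p q r w : R) : p - q - (r - w) = p - r - (q - w) by ring.
congr RInt; apply: functional_extensionality => t.
by rewrite /haar_kernel; case: (th j) => //; exact: e.
Qed.

Lemma haar_int_near j (Q : R -> R) C E : (forall t, continuous Q t) ->
  (forall t, a j <= t <= a j + haar_width j -> Rabs (haar_kernel j Q t - C) <= E) ->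
  Rabs (haar_int j Q - haar_width j * C) <= haar_width j * E.
Proof.
move=> hQ hb; have hw := haar_width_gt0 j.
have := @RInt_near_const (haar_kernel j Q) (a j) (a j + haar_width j) C E.
rewrite (_ : a j + haar_width j - a j = haar_width j); last by ring.
by apply; [lra | exact: continuous_haar_kernel | exact: hb].
Qed.

Lemma haar_int_dist j (Q1 Q2 : R -> R) B :
  (forall t, continuous Q1 t) -> (forall t, continuous Q2 t) ->
  (forall t, Rabs (Q1 t - Q2 t) <= B) ->
  Rabs (haar_int j Q1 - haar_int j Q2) <= 2 * h * B.
Proof.
move=> h1 h2 hB; have B0 : 0 <= B by apply: Rle_trans (hB 0); exact: Rabs_pos.
rewrite -haar_int_sub //.
have := @haar_int_near j (fun t => Q1 t - Q2 t) 0 (2 * B).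
rewrite Rmult_0_r Rminus_0_r => H; apply: Rle_trans (H _ _) _.
- by move=> t; apply: (continuous_minus Q1 Q2).
- move=> t _; rewrite Rminus_0_r /haar_kernel; case: (th j); last by have := hB t; lra.
  apply: Rle_trans (Rabs_triang _ _) _; rewrite Rabs_Ropp.
  by have := hB t; have := hB (t + h / 2); lra.
- rewrite /haar_width; case: (th j); nra.
Qed.

Lemma coord_lipschitz_iter_haar_int l K :
  coord_lipschitz K -> coord_lipschitz (iter_haar_int l K).
Proof.
elim: l => [|j l IH] //= hK.
have [M [M0 HM]] := IH hK; have hc := coord_lipschitz_continuous (IH hK).
exists (2 * h * M); split; first nra.
move=> x k u; case: (eqVneq k j) => [->|hkj].
  have -> : (fun t => iter_haar_int l K (upd (upd x j u) j t)) =
            (fun t => iter_haar_int l K (upd x j t)).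
    by apply: functional_extensionality => t; rewrite upd_upd.
  rewrite Rminus_diag Rabs_R0; apply: Rmult_le_pos; [nra | exact: Rabs_pos].
rewrite Rmult_assoc; apply: haar_int_dist => [t|t|t]; try exact: hc.
by rewrite (upd_comm _ _ _ hkj); have := HM (upd x j t) k u; rewrite upd_other.
Qed.

Lemma iter_haar_int_ext l K1 K2 x1 x2 : uniq l ->
  (forall y1 y2, (forall i, i \in l -> y1 i = y2 i) ->
     (forall i, i \notin l -> y1 i = x1 i /\ y2 i = x2 i) -> K1 y1 = K2 y2) ->
  iter_haar_int l K1 x1 = iter_haar_int l K2 x2.
Proof.
elim: l x1 x2 => [|j l IH] x1 x2 /=; first by move=> _ H; apply: H.
move=> /andP [jl ul] H; congr (haar_int j _); apply: functional_extensionality => t.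
apply: IH => // y1 y2 hin hout; apply: H => i.
  rewrite inE => /orP [/eqP ->|il]; last exact: hin.
  by have [-> ->] := hout j jl; rewrite !upd_same.
rewrite inE negb_or => /andP [ij il].
by have [-> ->] := hout i il; rewrite !upd_other.
Qed.

Lemma iter_haar_int_sub l K1 K2 x : coord_lipschitz K1 -> coord_lipschitz K2 ->
  iter_haar_int l (fun y => K1 y - K2 y) x = iter_haar_int l K1 x - iter_haar_int l K2 x.
Proof.
move=> h1 h2; elim: l x => [|j l IH] x //=.
have -> : (fun t => iter_haar_int l (fun y => K1 y - K2 y) (upd x j t)) =
   (fun t => iter_haar_int l K1 (upd x j t) - iter_haar_int l K2 (upd x j t)).
  by apply: functional_extensionality => t; rewrite IH.
by apply: haar_int_sub => t; apply: coord_lipschitz_continuous;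
  exact: coord_lipschitz_iter_haar_int.
Qed.

Definition shift_half j (K : vec s -> R) y := K (upd y j (y j + h / 2)).

Definition haar_diff j (K : vec s -> R) y := if th j then K y - shift_half j K y else K y.

Fixpoint iter_haar_diff (l : seq 'I_s) (K : vec s -> R) : vec s -> R :=
  match l with [::] => K | j :: l' => iter_haar_diff l' (haar_diff j K) end.

Lemma coord_lipschitz_shift_half j K : coord_lipschitz K -> coord_lipschitz (shift_half j K).
Proof.
move=> [M [M0 HM]]; exists M; split => // x k u; rewrite /shift_half.
case: (eqVneq k j) => [->|hkj].
  rewrite upd_upd upd_same.
  have := HM (upd x j (x j + h / 2)) j (u + h / 2); rewrite upd_upd upd_same.
  by rewrite (_ : u + h / 2 - (x j + h / 2) = u - x j); last ring.
rewrite upd_other; last by rewrite eq_sym.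
by rewrite (upd_comm _ _ _ hkj); have := HM (upd x j (x j + h / 2)) k u; rewrite upd_other.
Qed.

Lemma coord_lipschitz_haar_diff j K : coord_lipschitz K -> coord_lipschitz (haar_diff j K).
Proof.
move=> hK; rewrite /haar_diff; case: (th j) => //.
by apply: coord_lipschitz_sub => //; exact: coord_lipschitz_shift_half.
Qed.

Lemma haar_kernel_iter_haar_int j l K x t : j \notin l -> uniq l -> coord_lipschitz K ->
  haar_kernel j (fun u => iter_haar_int l K (upd x j u)) t =
  iter_haar_int l (haar_diff j K) (upd x j t).
Proof.
move=> jl ul hK; rewrite /haar_kernel /haar_diff; case: (th j) => //.
rewrite iter_haar_int_sub //; last exact: coord_lipschitz_shift_half.
congr (_ - _); apply: iter_haar_int_ext => // y1 y2 hin hout; rewrite /shift_half.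
have [e1 e2] := hout j jl; rewrite e2 upd_same.
congr K; apply: functional_extensionality => i.
case: (eqVneq i j) => [->|hij]; first by rewrite e1 !upd_same.
rewrite upd_other //; case: (boolP (i \in l)) => il; first by rewrite hin.
by have [-> ->] := hout i il; rewrite !upd_other.
Qed.

Definition in_cell (l : seq 'I_s) (x y : vec s) :=
  forall i, if i \in l then a i <= y i <= a i + haar_width i else y i = x i.

Definition cell_volume (l : seq 'I_s) := Rprodl (map haar_width l).

Lemma in_cell_cons l j x t y : j \notin l -> a j <= t <= a j + haar_width j ->
  in_cell l (upd x j t) y -> in_cell (j :: l) x y.
Proof.
move=> jl ht H i; have := H i; rewrite inE.
case: (eqVneq i j) => [->|hij] /=; first by rewrite (negbTE jl) upd_same => ->.
by case: (i \in l) => //; rewrite upd_other.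
Qed.

Lemma iter_haar_int_near l K x C E : uniq l -> coord_lipschitz K ->
  (forall y, in_cell l x y -> Rabs (iter_haar_diff l K y - C) <= E) ->
  Rabs (iter_haar_int l K x - cell_volume l * C) <= cell_volume l * E.
Proof.
elim: l K x => [|j l IH] K x /=.
  by move=> _ _ H; rewrite /cell_volume /= !Rmult_1_l; apply: H => i; rewrite in_nil.
move=> /andP [jl ul] hK H; rewrite /cell_volume /= -/(cell_volume l) !Rmult_assoc.
apply: haar_int_near => [t|t ht].
  by apply: coord_lipschitz_continuous; exact: coord_lipschitz_iter_haar_int.
rewrite haar_kernel_iter_haar_int //; apply: IH => // [|y hy].
  exact: coord_lipschitz_haar_diff.
by apply: H; exact: (in_cell_cons jl ht hy).
Qed.

Lemma pd_haar_diff i j (g : vec s -> R) : i != j -> pderivable g i ->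
  pderivable (haar_diff j g) i /\ pd i (haar_diff j g) = haar_diff j (pd i g).
Proof.
move=> hij hg; rewrite /haar_diff; case: (th j) => //.
have E w : (fun t => g (upd w i t) - shift_half j g (upd w i t)) =
           (fun t => g (upd w i t) - g (upd (upd w j (w j + h / 2)) i t)).
  apply: functional_extensionality => t.
  by rewrite /shift_half upd_other 1?eq_sym // (upd_comm _ _ _ hij).
have hs w : ex_derive (fun t => g (upd (upd w j (w j + h / 2)) i t)) (w i).
  by have := hg (upd w j (w j + h / 2)); rewrite upd_other.
split=> [w|]; first by rewrite /pderivable E; exact: ex_derive_minus.
apply: functional_extensionality => w; rewrite /pd E Derive_minus //.
by rewrite /shift_half upd_other.
Qed.

Lemma pd_iter_haar_diff l i g : i \notin l -> pderivable g i ->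
  pderivable (iter_haar_diff l g) i /\ pd i (iter_haar_diff l g) = iter_haar_diff l (pd i g).
Proof.
elim: l g => [|j l IH] g /=; first by split.
rewrite inE negb_or => /andP [ij il] hg.
have [e1 e2] := pd_haar_diff ij hg.
by have [e3 e4] := IH _ il e1; rewrite e4 e2.
Qed.

Lemma iter_haar_diff_rcons l j g :
  iter_haar_diff (rcons l j) g = haar_diff j (iter_haar_diff l g).
Proof. by elim: l g => [|k l IH] g //=; rewrite IH. Qed.

(* One mean value theorem per direction of [filter th l], each contributing a
   factor [- h/2] and moving the evaluation point inside the cell. *)
Lemma iter_haar_diff_near l g y T E : uniq l ->
  (forall L, (size L < size (filter th l))%N -> forall i, pderivable (pdl L g) i) ->
  (forall z, (forall i, i \notin filter th l -> z i = y i) ->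
     (forall i, i \in filter th l -> y i <= z i <= y i + h / 2) ->
     Rabs (pdl (filter th l) g z - T) <= E) ->
  Rabs (iter_haar_diff l g y - (- (h / 2)) ^ size (filter th l) * T)
    <= (h / 2) ^ size (filter th l) * E.
Proof.
elim/last_ind: l g y => [|l j IH] g y.
  by move=> _ _ H /=; rewrite !Rmult_1_l; apply: H.
rewrite rcons_uniq => /andP [jl ul].
rewrite iter_haar_diff_rcons filter_rcons /haar_diff; case hj: (th j) => hD H; last exact: IH.
set J := filter th l in hD H *.
have jJ : j \notin J by rewrite mem_filter negb_and jl orbT.
have hgj : pderivable g j by apply: (hD [::]); rewrite size_rcons.
have [hG1 hG2] := pd_iter_haar_diff jl hgj.
have [c [hc eqc]] := pd_mvt hG1 y (y j + h / 2).
rewrite Rmin_left in hc; last lra; rewrite Rmax_right in hc; last lra.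
have -> : iter_haar_diff l g y - shift_half j (iter_haar_diff l g) y =
          - (h / 2) * iter_haar_diff l (pd j g) (upd y j c).
  by rewrite /shift_half -hG2; lra.
have IH' : Rabs (iter_haar_diff l (pd j g) (upd y j c) - (- (h / 2)) ^ size J * T)
    <= (h / 2) ^ size J * E.
  apply: IH => // [L hL i|z hz1 hz2]; rewrite -pdl_rcons.
    by apply: hD; rewrite !size_rcons.
  apply: H => i; rewrite mem_rcons inE.
    rewrite negb_or => /andP [hij hiJ].
    by rewrite hz1 // upd_other.
  case/orP => [/eqP ->|hiJ]; first by rewrite hz1 // upd_same; lra.
  have hij : i != j by apply: contraNneq jJ => <-.
  by have := hz2 i hiJ; rewrite upd_other.
rewrite size_rcons /=.
set X := iter_haar_diff l (pd j g) (upd y j c).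
have -> : - (h / 2) * X - - (h / 2) * (- (h / 2)) ^ size J * T
   = - (h / 2) * (X - (- (h / 2)) ^ size J * T) by ring.
rewrite Rabs_mult Rabs_Ropp Rabs_pos_eq; last lra.
by rewrite Rmult_assoc; apply: Rmult_le_compat_l => //; lra.
Qed.

End HaarCell.

Lemma RInt_weight_const (w Q : R -> R) k u v : u <= v -> (forall t, continuous Q t) ->
  (forall t, u < t < v -> w t = k) ->
  ex_RInt (fun t => w t * Q t) u v /\ RInt (fun t => w t * Q t) u v = k * RInt Q u v.
Proof.
move=> huv hQ hw.
have e t : Rmin u v < t < Rmax u v -> k * Q t = w t * Q t.
  by rewrite Rmin_left // Rmax_right // => /hw ->.
have hk : ex_RInt (fun t => k * Q t) u v.
  by apply: (ex_RInt_scal Q); exact: ex_RInt_cont.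
split; first exact: ex_RInt_ext e hk.
rewrite -(RInt_ext _ _ _ _ e); apply: (RInt_scal Q); exact: ex_RInt_cont.
Qed.

Section HaarWeights.
Variables (s : nat) (th : 'I_s -> bool) (h : R) (a : vec s) (phi : 'I_s -> R -> R).
Hypothesis h_gt0 : 0 < h.
Hypothesis phi0 : forall j t, th j = false -> a j < t < a j + h -> phi j t = 1.
Hypothesis phi1_left : forall j t, th j = true -> a j < t < a j + h / 2 -> phi j t = 1.
Hypothesis phi1_right :
  forall j t, th j = true -> a j + h / 2 < t < a j + h -> phi j t = -1.

Lemma RInt_haar_weight j (Q : R -> R) : (forall t, continuous Q t) ->
  ex_RInt (fun t => phi j t * Q t) (a j) (a j + h) /\
  RInt (fun t => phi j t * Q t) (a j) (a j + h) = haar_int th h a j Q.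
Proof.
move=> hQ; rewrite /haar_int /haar_kernel /haar_width; case hj: (th j).
- set c := a j + h / 2.
  have [e1 r1] := @RInt_weight_const (phi j) Q 1 (a j) c ltac:(rewrite /c; lra) hQ
    (fun t => phi1_left hj).
  have [e2 r2] := @RInt_weight_const (phi j) Q (-1) c (a j + h) ltac:(rewrite /c; lra) hQ
    (fun t => phi1_right hj).
  have hQs : ex_RInt (fun t => Q (t + h / 2)) (a j) c.
    by apply: ex_RInt_cont; exact: continuous_shift.
  have hC : RInt (fun t => phi j t * Q t) (a j) c +
            RInt (fun t => phi j t * Q t) c (a j + h) =
            RInt (fun t => phi j t * Q t) (a j) (a j + h) := RInt_Chasles _ _ _ _ e1 e2.
  have hS : RInt (fun t => Q (t + h / 2)) (a j) c = RInt Q c (a j + h).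
    have -> : RInt (fun t => Q (t + h / 2)) (a j) c =
              RInt (fun t => scal 1 (Q (1 * t + h / 2))) (a j) c.
      by apply: RInt_ext => t _; rewrite scal_one Rmult_1_l.
    rewrite RInt_comp_lin; last exact: ex_RInt_cont.
    by rewrite /c; congr RInt; field.
  split; first exact: ex_RInt_Chasles e1 e2.
  rewrite -hC r1 r2 RInt_minusR //; last exact: ex_RInt_cont.
  have e (p q : R) : 1 * p + -1 * q = p - q by ring.
  by rewrite hS e.
- have [e r] := @RInt_weight_const (phi j) Q 1 (a j) (a j + h) ltac:(lra) hQ
    (fun t => phi0 hj).
  by rewrite r Rmult_1_l.
Qed.

Lemma iter_int_haar_weights l K W x : uniq l -> coord_lipschitz K ->
  (forall y j u, j \in l -> W (upd y j u) = W y) ->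
  iter_int l a (fun j => a j + h)
    (fun t => K t * (W t * Rprodl (map (fun j => phi j (t j)) l))) x
  = W x * iter_haar_int th h a l K x.
Proof.
elim: l W x => [|j l IH] W x /=; first by move=> *; rewrite /Rprodl /=; ring.
move=> /andP [jl ul] hK hW.
pose W' y := W y * phi j (y j).
have hW' y k u : k \in l -> W' (upd y k u) = W' y.
  move=> kl; rewrite /W' hW ?inE ?kl ?orbT // upd_other //.
  by apply: contraNneq jl => ->.
have -> : (fun t => iter_int l a (fun j => a j + h)
      (fun y => K y * (W y * Rprodl (map (fun j0 => phi j0 (y j0)) (j :: l))))
      (upd x j t)) =
    (fun t => W x * (phi j t * iter_haar_int th h a l K (upd x j t))).
  apply: functional_extensionality => t.
  transitivity (iter_int l a (fun j => a j + h)
    (fun y => K y * (W' y * Rprodl (map (fun j0 => phi j0 (y j0)) l))) (upd x j t)).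
    by congr iter_int; apply: functional_extensionality => y; rewrite /W' /Rprodl /=; ring.
  by rewrite IH // /W' hW ?mem_head // upd_same; ring.
have hc t : continuous (fun t => iter_haar_int th h a l K (upd x j t)) t.
  by apply: coord_lipschitz_continuous; exact: coord_lipschitz_iter_haar_int.
have [ex eq] := RInt_haar_weight j hc.
by rewrite (RInt_scal _ _ _ _ ex) eq.
Qed.

End HaarWeights.

Lemma psi0_unit y : 0 < y < 1 -> psi0 y = 1.
Proof. by rewrite /psi0 /chi => hy; repeat (case: Rle_dec => ? /=); lra. Qed.

Lemma psi1_left y : 0 < y < / 2 -> psi1 y = 1.
Proof. by rewrite /psi1 /chi => hy; repeat (case: Rle_dec => ? /=); lra. Qed.

Lemma psi1_right y : / 2 < y < 1 -> psi1 y = -1.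
Proof. by rewrite /psi1 /chi => hy; repeat (case: Rle_dec => ? /=); lra. Qed.

Lemma haar_coef_iter_haar_int s (th : 'I_s -> bool) n alpha f : coord_lipschitz f ->
  haar_coef th n alpha f = Rpower 2 (INR (n * s) / 2) *
    iter_haar_int th (/ 2 ^ n) (fun j => IZR (alpha j) / 2 ^ n) (enum 'I_s) f (fun _ => 0).
Proof.
move=> hf; have hP : 0 < 2 ^ n by apply: pow_lt; lra.
set h := / 2 ^ n; set a := fun j => IZR (alpha j) / 2 ^ n.
have h_gt0 : 0 < h by apply: Rinv_0_lt_compat.
pose phi j t := psi1d (th j) (2 ^ n * t - IZR (alpha j)).
have hscale j t lo hi :
    a j + lo * h < t < a j + hi * h -> lo < 2 ^ n * t - IZR (alpha j) < hi.
  have e : 2 ^ n * t - IZR (alpha j) = 2 ^ n * (t - a j) by rewrite /a; field; lra.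
  have eh u : 2 ^ n * (u * h) = u by rewrite /h; field; lra.
  rewrite e => ht; rewrite -{1}(eh lo) -{1}(eh hi).
  by split; apply: Rmult_lt_compat_l => //; lra.
have phi0 j t : th j = false -> a j < t < a j + h -> phi j t = 1.
  by rewrite /phi => -> ht; apply: psi0_unit; apply: (hscale j t 0 1); lra.
have phi1_left j t : th j = true -> a j < t < a j + h / 2 -> phi j t = 1.
  by rewrite /phi => -> ht; apply: psi1_left; apply: (hscale j t 0 (/ 2)); lra.
have phi1_right j t : th j = true -> a j + h / 2 < t < a j + h -> phi j t = -1.
  by rewrite /phi => -> ht; apply: psi1_right; apply: (hscale j t (/ 2) 1); lra.
have := @iter_int_haar_weights _ th h a phi h_gt0 phi0 phi1_left phi1_right
  (enum 'I_s) f (fun _ => 1) (fun _ => 0) (enum_uniq _) hf (fun _ _ _ _ => erefl).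
rewrite /= Rmult_1_l /haar_coef /box_integral => <-; congr (_ * iter_int _ _ _ _ _).
- by apply: functional_extensionality => j; rewrite /a /h; field; lra.
- by apply: functional_extensionality => t; rewrite Rmult_1_l.
Qed.

(** * Symmetry of mixed partial derivatives *)

Lemma Derive_line_comm s (H : vec s -> R) i j w v u : i != j ->
  Derive (fun t => H (upd (upd w i t) j v)) u = pd i H (upd (upd w i u) j v).
Proof.
move=> hij; rewrite (upd_comm _ _ _ hij) -Derive_line; congr Derive.
by apply: functional_extensionality => t; rewrite upd_comm.
Qed.

Lemma pderivable_line_comm s (H : vec s -> R) i j w v u : i != j -> pderivable H i ->
  ex_derive (fun t => H (upd (upd w i t) j v)) u.
Proof.
move=> hij hH.
have -> : (fun t => H (upd (upd w i t) j v)) = (fun t => H (upd (upd w j v) i t)).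
  by apply: functional_extensionality => t; rewrite upd_comm.
exact: pderivable_line.
Qed.

Lemma continuity_2d_upd s (H : vec s -> R) i j w : cont_vec H ->
  continuity_2d_pt (fun u v => H (upd (upd w i u) j v)) (w i) (w j).
Proof.
move=> hH eps; have [d [d0 hd]] := hH w eps (cond_pos eps).
exists (mkposreal d d0) => u v /= hu hv.
rewrite !upd_id; apply: hd => k; rewrite /upd.
case: (eqVneq k j) => [->|_] //; case: (eqVneq k i) => [->|_] //.
rewrite Rminus_diag Rabs_R0; lra.
Qed.

Lemma pd_comm s (G : vec s -> R) i j :
  (forall k, pderivable G k) -> (forall k, pderivable (pd i G) k) ->
  (forall k, pderivable (pd j G) k) ->
  cont_vec (pd i (pd j G)) -> cont_vec (pd j (pd i G)) ->
  pd i (pd j G) = pd j (pd i G).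
Proof.
case: (eqVneq i j) => [-> //|hij] hG hGi hGj cij cji.
apply: functional_extensionality => w.
pose F u v := G (upd (upd w i u) j v).
have Dj v :
    (fun z => Derive (fun t => F z t) v) = (fun z => pd j G (upd (upd w i z) j v)).
  by apply: functional_extensionality => z; exact: Derive_line.
have Di u :
    (fun z => Derive (fun t => F t z) u) = (fun z => pd i G (upd (upd w i u) j z)).
  by apply: functional_extensionality => z; exact: Derive_line_comm.
have -> : pd i (pd j G) w = Derive (fun z => Derive (fun t => F z t) (w j)) (w i).
  rewrite Dj {1}/pd; congr Derive; apply: functional_extensionality => z.
  by rewrite (upd_comm _ _ _ hij) upd_id.
have -> : pd j (pd i G) w = Derive (fun z => Derive (fun t => F t z) (w i)) (w j).
  by rewrite Di upd_id.
apply: Schwarz.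
- exists (mkposreal 1 Rlt_0_1) => u v _ _; split; [|split; [|split]].
  + exact: pderivable_line_comm hij (hG i).
  + exact: (pderivable_line (hG j) (upd w i u) v).
  + by rewrite Dj; exact: pderivable_line_comm hij (hGj i).
  + by rewrite Di; exact: (pderivable_line (hGi j) (upd w i u) v).
- have -> : (fun u v => Derive (fun z => Derive (fun t => F z t) v) u) =
            (fun u v => pd i (pd j G) (upd (upd w i u) j v)).
    do 2 apply: functional_extensionality => ?.
    by rewrite Dj Derive_line_comm.
  exact: continuity_2d_upd.
- have -> : (fun u v => Derive (fun z => Derive (fun t => F t z) u) v) =
            (fun u v => pd j (pd i G) (upd (upd w i u) j v)).
    do 2 apply: functional_extensionality => ?.
    by rewrite Di Derive_line.
  exact: continuity_2d_upd.
Qed.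

Section SmoothPartials.
Variables (s k : nat) (f : vec s -> R).
Hypothesis hf : Ck k f.

Lemma Ck_le m : (m <= k)%N -> Ck m f.
Proof.
move=> hm; split=> L hL; [apply: hf.1 | apply: hf.2]; exact: leq_trans hL hm.
Qed.

Lemma Ck_pderivable L : (size L < k)%N -> forall j, pderivable (pdl L f) j.
Proof. by move=> hL j x; exact: hf.1. Qed.

Lemma Ck_pd_comm L i j : ((size L).+2 <= k)%N ->
  pd i (pd j (pdl L f)) = pd j (pd i (pdl L f)).
Proof.
move=> hL; apply: pd_comm => [m|m|m||]; try exact: (hf.2 (_ :: _ :: _)).
- exact: (Ck_pderivable (ltnW hL) m).
- exact: (@Ck_pderivable (i :: L) hL m).
- exact: (@Ck_pderivable (j :: L) hL m).
Qed.

Lemma pd_pdl_cat j p1 p2 : (size (p1 ++ p2) < k)%N ->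
  pd j (pdl (p1 ++ p2) f) = pdl (p1 ++ j :: p2) f.
Proof.
elim: p1 => [|i p1 IH] //= hs.
by rewrite Ck_pd_comm // IH //; exact: ltnW.
Qed.

Lemma pdl_perm l1 l2 : perm_eq l1 l2 -> (size l1 <= k)%N -> pdl l1 f = pdl l2 f.
Proof.
elim: l1 l2 => [|x l1 IH] l2 hp hs.
  by move/perm_size: hp => /= /esym/size0nil ->.
have hx : x \in l2 by rewrite -(perm_mem hp) mem_head.
move: hp; case/splitPr: hx => p1 p2 hp.
have hp' : perm_eq l1 (p1 ++ p2).
  rewrite -(perm_cons x); apply: (perm_trans hp).
  by rewrite -[x :: p2]cat1s perm_catCA.
rewrite /= (IH _ hp'); last exact: ltnW.
by apply: pd_pdl_cat; rewrite -(perm_size hp').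
Qed.

End SmoothPartials.

Lemma count_flatten_nseq (T : eqType) (g : T -> nat) (e : seq T) x : uniq e ->
  count_mem x (flatten (map (fun i => nseq (g i) i) e)) = if x \in e then g x else 0%N.
Proof.
elim: e => [|k e IH] //= /andP [ke ue].
rewrite count_cat count_nseq IH // inE.
case: (eqVneq k x) => [<-|hkx] /=; first by rewrite eqxx (negbTE ke) mul1n addn0.
by rewrite (negbTE hkx) mul0n.
Qed.

Lemma size_flatten_nseq (T : Type) (g : T -> nat) (e : seq T) :
  size (flatten (map (fun i => nseq (g i) i) e)) = foldr addn 0%N (map g e).
Proof. by elim: e => //= k e IH; rewrite size_cat size_nseq IH. Qed.

Lemma Dmulti_count s k (f : vec s -> R) (L : seq 'I_s) : Ck k f -> (size L <= k)%N ->
  Dmulti (fun i => count_mem i L) f = pdl L f /\ mabs (fun i => count_mem i L) = size L.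
Proof.
move=> hf hL.
have hp : perm_eq L (flatten (map (fun i => nseq (count_mem i L) i) (enum 'I_s))).
  apply/allP => y _ /=; apply/eqP.
  by rewrite count_flatten_nseq ?enum_uniq // mem_enum.
split; first by rewrite /Dmulti (pdl_perm hf hp).
by rewrite /mabs -size_flatten_nseq -(perm_size hp).
Qed.

Lemma mfact_le s (g : 'I_s -> nat) k : (forall i, g i <= k)%N -> (mfact g <= k`! ^ s)%N.
Proof.
move=> hg; rewrite /mfact -[X in (_ <= _ ^ X)%N](size_enum_ord s).
elim: (enum 'I_s) => //= i e IH; rewrite expnS.
by apply: leq_mul => //; exact: leq_fact.
Qed.

Lemma mfact_gt0 s (g : 'I_s -> nat) : (0 < mfact g)%N.
Proof. by rewrite /mfact; elim: (enum 'I_s) => //= i e IH; rewrite muln_gt0 fact_gt0. Qed.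

(* [Dk_bounded] only controls [D^gamma f / gamma!]; since [gamma! <= (k!)^s] and
   mixed partials commute, every order-[k] derivative is bounded. *)
Lemma Dk_bounded_pdl s k (f : vec s -> R) : Ck k f -> Dk_bounded k f ->
  exists M, 0 <= M /\ forall L, size L = k -> forall x, Rabs (pdl L f x) <= M.
Proof.
move=> hf [M0 HM]; exists (Rmax 0 M0 * INR (k`! ^ s)); split.
  by apply: Rmult_le_pos; [exact: Rmax_l | exact: pos_INR].
move=> L hL x; have [eD emabs] := Dmulti_count hf (eq_leq hL).
set g := fun i => count_mem i L in eD emabs.
have := HM x g (etrans emabs hL); rewrite eD.
have hmf : 0 < INR (mfact g) by apply: lt_0_INR; apply/ltP; exact: mfact_gt0.
have hmf2 : INR (mfact g) <= INR (k`! ^ s).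
  by apply: le_INR; apply/leP; apply: mfact_le => i; rewrite -hL; exact: count_size.
rewrite -{2}(Rmult_1_r (pdl L f x)) -(Rinv_l (INR (mfact g))); last lra.
rewrite -Rmult_assoc Rabs_mult (Rabs_pos_eq (INR _)); last lra.
have := Rmax_r 0 M0; have := Rabs_pos (pdl L f x / INR (mfact g)); rewrite /Rdiv; nra.
Qed.

Lemma pdl_lipschitz s k (f : vec s -> R) L : Ck k f -> (size L < k)%N ->
  Dk_bounded (size L).+1 f -> exists M, 0 <= M /\ coord_lipschitz_by (pdl L f) M.
Proof.
move=> hf hL hD; have [M [M0 HM]] := Dk_bounded_pdl (Ck_le hf hL) hD.
exists M; split => //; apply: pd_bounded_lipschitz => [j|x j].
  exact: (Ck_pderivable hf hL j).
exact: (HM (j :: L)).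
Qed.

(** * Convergence of the rescaled Haar coefficients *)

Definition theta_support {s} (th : 'I_s -> bool) : seq 'I_s := filter th (enum 'I_s).

Lemma mabs_theta_nat s (th : 'I_s -> bool) : mabs (theta_nat th) = size (theta_support th).
Proof.
by rewrite /mabs /theta_nat /theta_support; elim: (enum 'I_s) => //= j e ->; case: (th j).
Qed.

Lemma Dmulti_theta_nat s (th : 'I_s -> bool) (f : vec s -> R) :
  Dmulti (theta_nat th) f = pdl (theta_support th) f.
Proof.
rewrite /Dmulti /theta_nat /theta_support; congr pdl.
by elim: (enum 'I_s) => //= j e ->; case: (th j).
Qed.

Lemma mfact_theta_nat s (th : 'I_s -> bool) : mfact (theta_nat th) = 1%N.
Proof. by rewrite /mfact /theta_nat; elim: (enum 'I_s) => //= j e ->; case: (th j). Qed.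

Lemma cell_volume_pow s (th : 'I_s -> bool) h l :
  cell_volume th h l * 2 ^ size (filter th l) = h ^ size l.
Proof.
elim: l => [|j l IH]; first by rewrite /cell_volume /=; ring.
rewrite /cell_volume /= -/(cell_volume th h l) /haar_width -IH.
by case: (th j) => /=; field.
Qed.

Lemma iter_haar_int_estimate s (th : 'I_s -> bool) h a (g : vec s -> R) M :
  0 < h -> 0 <= M -> coord_lipschitz g ->
  (forall L, (size L < size (theta_support th))%N -> forall i, pderivable (pdl L g) i) ->
  coord_lipschitz_by (pdl (theta_support th) g) M ->
  Rabs (iter_haar_int th h a (enum 'I_s) g (fun _ => 0) - cell_volume th h (enum 'I_s) *
        ((- (h / 2)) ^ size (theta_support th) *
         pdl (theta_support th) g (fun j => a j + h / 2)))
  <= cell_volume th h (enum 'I_s) *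
     ((h / 2) ^ size (theta_support th) * (M * INR s * (h / 2))).
Proof.
move=> h_gt0 M0 hg hD hLip.
apply: (iter_haar_int_near h_gt0 (enum_uniq _) hg) => y hy.
apply: (iter_haar_diff_near h_gt0 (enum_uniq _) hD) => z hz1 hz2.
apply: (coord_lipschitz_box M0 hLip) => i.
have hin : i \in enum 'I_s by rewrite mem_enum.
have := hy i; rewrite hin /haar_width; case hti: (th i) => hyi.
  have := hz2 i; rewrite mem_filter hti mem_enum => /(_ isT) hzi.
  by apply: Rabs_le; lra.
by rewrite hz1 ?mem_filter ?hti //; apply: Rabs_le; lra.
Qed.

Lemma rescale_bound (k m : nat) (P I T V E : R) : 0 < P -> V * 2 ^ k = (/ P) ^ m ->
  Rabs (I - V * ((- (/ P / 2)) ^ k * T)) <= V * ((/ P / 2) ^ k * E) ->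
  Rabs ((-1) ^ k * (P ^ k * 4 ^ k * P ^ m) * I - T) <= E.
Proof.
move=> hP hV hb; set S := P ^ k * 4 ^ k * P ^ m.
have hk : 2 ^ k <> 0 by apply: pow_nonzero; lra.
have hSV : S * (V * (/ P / 2) ^ k) = 1.
  have -> : V = (/ P) ^ m / 2 ^ k by rewrite -hV; field.
  rewrite /S /Rdiv (_ : 4 = 2 * 2); last ring.
  rewrite !Rpow_mult_distr !pow_inv.
  by field; repeat split; apply: pow_nonzero; lra.
have hneg : (- (/ P / 2)) ^ k = (-1) ^ k * (/ P / 2) ^ k.
  by rewrite -Rpow_mult_distr; congr pow; ring.
have hsq : (-1) ^ k * (-1) ^ k = 1.
  by rewrite -Rpow_mult_distr (_ : -1 * -1 = 1) ?pow1 //; ring.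
have hS0 : 0 < S by rewrite /S; repeat apply: Rmult_lt_0_compat; apply: pow_lt; lra.
clearbody S.
have -> : (-1) ^ k * S * I - T = (-1) ^ k * S * (I - V * ((- (/ P / 2)) ^ k * T)).
  rewrite hneg; transitivity ((-1) ^ k * S * I -
    ((-1) ^ k * (-1) ^ k) * (S * (V * (/ P / 2) ^ k)) * T).
    by rewrite hsq hSV; ring.
  by ring.
rewrite !Rabs_mult pow_1_abs Rmult_1_l (Rabs_pos_eq S); last lra.
apply: Rle_trans (Rmult_le_compat_l _ _ _ (Rlt_le _ _ hS0) hb) _.
have -> : S * (V * ((/ P / 2) ^ k * E)) = S * (V * (/ P / 2) ^ k) * E by ring.
by rewrite hSV; lra.
Qed.

Lemma Rpower2_scale n k s : Rpower 2 (INR ((n + 2) * k) + INR (n * s) / 2) *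
  Rpower 2 (INR (n * s) / 2) = (2 ^ n) ^ k * 4 ^ k * (2 ^ n) ^ s.
Proof.
rewrite -Rpower_plus (_ : INR ((n + 2) * k) + INR (n * s) / 2 + INR (n * s) / 2 =
  INR ((n + 2) * k) + INR (n * s)); last field.
rewrite Rpower_plus !Rpower_pow; try lra.
rewrite -!pow_mult (_ : 4 = 2 ^ 2); last by rewrite /=; ring.
by rewrite -pow_mult -!pow_add; congr pow; rewrite -?multE -?plusE; ring.
Qed.

Lemma eventually_div_pow2_le C eps : 0 < eps ->
  exists N : nat, forall n, (N <= n)%N -> C / 2 ^ n <= eps.
Proof.
move=> heps; have hK : 0 < Rabs C + 1 by have := Rabs_pos C; lra.
have [N [hN N0]] := archimed_cor1 (eps / (Rabs C + 1)) (Rdiv_lt_0_compat _ _ heps hK).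
exists N => n /leP hn.
have hN0 : 0 < INR N by apply: lt_0_INR.
have hNn : INR N <= 2 ^ n.
  apply: Rle_trans (le_INR _ _ hn) _; suff : INR n + 1 <= 2 ^ n by lra.
  elim: n {hn} => [|n IH]; first by rewrite /=; lra.
  by rewrite S_INR /=; have := pos_INR n; lra.
have hP : 0 < 2 ^ n by apply: pow_lt; lra.
apply: Rle_trans (_ : Rabs C / INR N <= _).
  apply: Rle_trans (_ : Rabs C / 2 ^ n <= _).
    by apply: Rmult_le_compat_r; [apply/Rlt_le/Rinv_0_lt_compat | exact: Rle_abs].
  by apply: Rmult_le_compat_l; [exact: Rabs_pos | exact: Rinv_le_contravar].
have -> : eps = (Rabs C + 1) * (eps / (Rabs C + 1)) by field; lra.
by apply: Rmult_le_compat => //;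
  [exact: Rabs_pos | apply/Rlt_le/Rinv_0_lt_compat | lra | lra].
Qed.

Lemma haar_coef_error s (f : vec s -> R) (th : 'I_s -> bool) : Ck s.+1 f ->
  (forall k, (1 <= k)%N -> (k <= s.+1)%N -> Dk_bounded k f) ->
  exists C, forall n alpha,
    Rabs ((-1) ^ size (theta_support th) *
          Rpower 2 (INR ((n + 2) * size (theta_support th)) + INR (n * s) / 2) *
          haar_coef th n alpha f - pdl (theta_support th) f (xna n alpha)) <= C / 2 ^ n.
Proof.
move=> hf hD; set J := theta_support th.
have hJs : (size J < s.+1)%N.
  by rewrite ltnS size_filter -[X in (_ <= X)%N](size_enum_ord s) count_size.
have hLf : coord_lipschitz f := pdl_lipschitz (L := [::]) hf isT (hD 1%N isT isT).
have [M [M0 hLip]] := pdl_lipschitz hf hJs (hD (size J).+1 isT hJs).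
exists (M * INR s / 2) => n alpha.
have hP : 0 < 2 ^ n by apply: pow_lt; lra.
have hxna : xna n alpha = (fun j => IZR (alpha j) / 2 ^ n + / 2 ^ n / 2).
  by apply: functional_extensionality => j; rewrite /xna; field; lra.
have hV := cell_volume_pow th (/ 2 ^ n) (enum 'I_s); rewrite size_enum_ord in hV.
have := @iter_haar_int_estimate s th (/ 2 ^ n) (fun j => IZR (alpha j) / 2 ^ n) f M
  (Rinv_0_lt_compat _ hP) M0 hLf (fun L hL => Ck_pderivable hf (ltn_trans hL hJs)) hLip.
rewrite -hxna => /(rescale_bound hP hV) H.
rewrite haar_coef_iter_haar_int // -Rmult_assoc (Rmult_assoc ((-1) ^ _)) Rpower2_scale.
by apply: Rle_trans H _; right; field; lra.
Qed.

Theorem corollary3p3 (s : nat) (hs : (1 <= s)%N) (f : vec s -> R)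
  (hf : Ck s.+1 f)
  (hD : forall k : nat, (1 <= k)%N -> (k <= s.+1)%N -> Dk_bounded k f)
  (theta : 'I_s -> bool) :
  forall eps : R, 0 < eps -> exists N : nat, forall n : nat, (N <= n)%N ->
    forall alpha : 'I_s -> Z,
      Rabs ((-1) ^ mabs (theta_nat theta) *
            Rpower 2 (INR ((n + 2) * mabs (theta_nat theta)) + INR (n * s) / 2) *
            haar_coef theta n alpha f
            - Dmulti (theta_nat theta) f (xna n alpha) / INR (mfact (theta_nat theta)))
      <= eps.
Proof.
move=> eps heps.
have [C HC] := haar_coef_error theta hf hD.
have [N HN] := eventually_div_pow2_le C heps.
exists N => n hn alpha.
rewrite mabs_theta_nat Dmulti_theta_nat mfact_theta_nat Rdiv_1_r.
exact: Rle_trans (HC n alpha) (HN n hn).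
Qed.
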